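(* Let $\mathcal{D}$ be a liability category, let $N=(G,X,\lambda,\iota;\delta,\hat\alpha)$ be a liability network in $\mathcal{D}$ with underlying finite directed graph $G=(V,E,s,t)$, and let $\mathcal{L}$ be its liability sheaf on the liability hypergraph $\mathcal{H}_G$. Then the assignment sending a global section $\sigma\in\Gamma(\mathcal{H}_G;\mathcal{L})$ to the family of its components $(x_v)_{v\in V}$, $x_v=\sigma_v:1\to X_v$, and $(p_e)_{e\in E}$, $p_e=\sigma_{e^*}:1\to X_{s(e)}^{\lambda_e}$, is a bijection from $\Gamma(\mathcal{H}_G;\mathcal{L})$ onto the set of families of global elements $x_v:1\to X_v$ ($v\in V$), $p_e:1\to X_{s(e)}^{\lambda_e}$ ($e\in E$) satisfying \[ p_e=\delta_e\circ x_{s(e)}\ \text{ for all } e\in E,\qquad x_v=\alpha_v\circ\langle p_e\rangle_{t(e)=v}\ \text{ for all } v\in V. \] In other words, a global section is uniquely determined by such elements satisfying these two equations, and every such family arises from a global section.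
   Context: A liability category is a category $\mathcal{D}$ such that: (1) $\mathcal{D}$ has a terminal object $1$, all finite products, and equalizers; (2) for each object $P$ the set $\mathrm{Hom}(1,P)$ of global elements carries a partial order $\leqslant$, and for each morphism $f:P\to Q$ the map $f_*:\mathrm{Hom}(1,P)\to\mathrm{Hom}(1,Q)$, $\rho\mapsto f\circ\rho$, is order-preserving; (3) for each $P$ there is a distinguished class $\mathcal{S}_P$ of monomorphisms $m:P^c\hookrightarrow P$ (one representative per subobject class), called constraint subobjects, stable under pullback: if $m\in\mathcal{S}_P$ and $f:Q\to P$, a chosen pullback $f^*m$ lies in $\mathcal{S}_Q$; (4) for each $P$ a bound selector $\beta_P:\mathrm{Hom}(1,P)\to\mathcal{S}_P$; (5) for every finite family $(P_i)$ the canonical map $\mathrm{Hom}(1,\prod_i P_i)\to\prod_i\mathrm{Hom}(1,P_i)$ is an order isomorphism for the componentwise order. A liability network in $\mathcal{D}$ is $N=(G,X,\lambda,\iota;\delta,\hat\alpha)$ where $G=(V,E,s,t)$ is a finite directed graph; $X_v\in\mathcal{D}$ ($v\in V$) are payment objects; $\lambda_e:1\to X_{s(e)}$ ($e\in E$) are liability morphisms; $\iota_v:1\to X_v$ are exogenous resource morphisms; writing $X_{s(e)}^{\lambda_e}$ for the domain of the constraint subobject $\beta_{X_{s(e)}}(\lambda_e)\hookrightarrow X_{s(e)}$, $\delta_e:X_{s(e)}\to X_{s(e)}^{\lambda_e}$ are distributor morphisms; and $\hat\alpha_v:X_v\times\prod_{t(e)=v}X_{s(e)}^{\lambda_e}\to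 X_v$ are aggregator morphisms. The partial aggregator is $\alpha_v:=\hat\alpha_v\circ(\iota_v\times\mathrm{id}):\prod_{t(e)=v}X_{s(e)}^{\lambda_e}\to X_v$ (via $\prod\cong 1\times\prod$); an empty product is the terminal object $1$. The liability hypergraph $\mathcal{H}_G$ has vertex set $V\sqcup\{e^*:e\in E\}$ and hyperedges $h_v^{\delta}$ ($v\in V$) with source $\{v\}$ and target $\{e^*:s(e)=v\}$, and $h_v^{\alpha}$ ($v\in V$) with empty source and target $\{e^*:t(e)=v\}\cup\{v\}$. Its incidence category $\mathcal{I}(\mathcal{H}_G)$ has as objects the vertices and hyperedges, with exactly one morphism $h\to w$ for each hyperedge $h$ and each vertex $w$ in the source or target of $h$, plus identities, and no other morphisms. The liability sheaf is the functor $\mathcal{L}:\mathcal{I}(\mathcal{H}_G)\to\mathcal{D}$ with $\mathcal{L}(v)=X_v$, $\mathcal{L}(e^* )=X_{s(e)}^{\lambda_e}$, $\mathcal{L}(h_v^\delta)=X_v$, $\mathcal{L}(h_v^\alpha)=\prod_{t(e)=v}X_{s(e)}^{\lambda_e}$, and $\mathcal{L}(h_v^\delta\to v)=\mathrm{id}_{X_v}$, $\mathcal{L}(h_v^\delta\to e^* )=\delta_e$, $\mathcal{L}(h_v^\alpha\to e^* )=\pi_e$ (product projection), $\mathcal{L}(h_v^\alpha\to v)=\alpha_v$. The global-section object is $H^0(\mathcal{H}_G;\mathcal{L})=\lim_{\mathcal{I}(\mathcal{H}_G)}\mathcal{L}$ and the set of global sections is $\Gamma(\mathcal{H}_G;\mathcal{L})=\mathrm{Hom}_{\mathcal{D}}(1,H^0(\mathcal{H}_G;\mathcal{L}))$;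 for $\sigma\in\Gamma$ and an object $y$ of $\mathcal{I}(\mathcal{H}_G)$, $\sigma_y$ denotes the composite of $\sigma$ with the limit projection to $\mathcal{L}(y)$. *)

From mathcomp Require Import all_boot.

Set Implicit Arguments.
Unset Strict Implicit.
Unset Printing Implicit Defensive.

Record Category := {
  Obj :> Type;
  Hom : Obj -> Obj -> Type;
  idm : forall A, Hom A A;
  cmp : forall A B C, Hom B C -> Hom A B -> Hom A C;
  cmpA : forall A B C D (h : Hom C D) (g : Hom B C) (f : Hom A B),
      cmp h (cmp g f) = cmp (cmp h g) f;
  cmp1l : forall A B (f : Hom A B), cmp (idm B) f = f;
  cmp1r : forall A B (f : Hom A B), cmp f (idm A) = f
}.

Arguments Hom {c} _ _.
Arguments idm {c} _.
Arguments cmp {c A B C} _ _.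

Section CatDefs.
Variable C : Category.

Definition is_mono (Q P : C) (m : Hom Q P) : Prop :=
  forall Z (a b : Hom Z Q), cmp m a = cmp m b -> a = b.

Definition is_iso (A B : C) (f : Hom A B) : Prop :=
  exists g : Hom B A, cmp g f = idm A /\ cmp f g = idm B.

Definition over (P : C) := {Q : C & Hom Q P}.

Definition same_subobject (P : C) (m n : over P) : Prop :=
  exists i : Hom (projT1 m) (projT1 n), is_iso i /\ cmp (projT2 n) i = projT2 m.

(* The square  Q' --k--> Qm ,  Q' --n--> Q ,  m : Qm -> P , f : Q -> P
   is a pullback square. *)
Definition is_pullback (P Q Qm Q' : C) (m : Hom Qm P) (f : Hom Q P)
    (n : Hom Q' Q) (k : Hom Q' Qm) : Prop :=
  cmp m k = cmp f n /\
  forall Z (a : Hom Z Q) (b : Hom Z Qm), cmp f a = cmp m b ->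
    exists! u : Hom Z Q', cmp n u = a /\ cmp k u = b.

End CatDefs.

Record LiabilityStructure (C : Category) := {
  term : Obj C;
  bang : forall A : Obj C, Hom A term;
  bang_uniq : forall A (f : Hom A term), f = bang A;
  prodO : forall I : finType, (I -> Obj C) -> Obj C;
  prj : forall (I : finType) (P : I -> Obj C) (i : I), Hom (prodO P) (P i);
  tpl : forall (I : finType) (P : I -> Obj C) (Z : Obj C),
      (forall i, Hom Z (P i)) -> Hom Z (prodO P);
  prj_tpl : forall (I : finType) (P : I -> Obj C) Z (f : forall i, Hom Z (P i)) i,
      cmp (prj P i) (tpl f) = f i;
  tpl_uniq : forall (I : finType) (P : I -> Obj C) Z (f : forall i, Hom Z (P i))
      (u : Hom Z (prodO P)), (forall i, cmp (prj P i) u = f i) -> u = tpl f;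
  eqzO : forall (A B : Obj C), Hom A B -> Hom A B -> Obj C;
  eqzm : forall A B (f g : Hom A B), Hom (eqzO f g) A;
  eqzm_eq : forall A B (f g : Hom A B), cmp f (eqzm f g) = cmp g (eqzm f g);
  eqz_univ : forall A B (f g : Hom A B) Z (h : Hom Z A), cmp f h = cmp g h ->
      exists! u : Hom Z (eqzO f g), cmp (eqzm f g) u = h;
  gle : forall P : Obj C, Hom term P -> Hom term P -> Prop;
  gle_refl : forall P (x : Hom term P), gle x x;
  gle_antisym : forall P (x y : Hom term P), gle x y -> gle y x -> x = y;
  gle_trans : forall P (x y z : Hom term P), gle x y -> gle y z -> gle x z;
  gle_post : forall P Q (f : Hom P Q) (x y : Hom term P),
      gle x y -> gle (cmp f x) (cmp f y);
  constr : forall P : Obj C, over P -> Prop;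
  constr_mono : forall P (m : over P), constr m -> is_mono (projT2 m);
  constr_rep : forall P (m n : over P), constr m -> constr n ->
      same_subobject m n -> m = n;
  constr_pb : forall P Q (m : over P) (f : Hom Q P), constr m ->
      exists n : over Q, constr n /\
        exists k : Hom (projT1 n) (projT1 m), is_pullback (projT2 m) f (projT2 n) k;
  bsel : forall P : Obj C, Hom term P -> {m : over P | constr m};
  prod_order : forall (I : finType) (P : I -> Obj C) (x y : Hom term (prodO P)),
      gle x y <-> (forall i, gle (cmp (prj P i) x) (cmp (prj P i) y))
}.

Arguments term {C} _.
Arguments bang {C} _ _.
Arguments prodO {C} _ {I} _.
Arguments prj {C} _ {I} _ _.
Arguments tpl {C} _ {I P Z} _.
Arguments bsel {C} _ {P} _.

Definition b2 (C : Category) (A B : Obj C) : bool -> Obj C :=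
  fun b => if b then A else B.

Definition bprod (C : Category) (D : LiabilityStructure C) (A B : Obj C) : Obj C :=
  prodO D (b2 A B).

Definition bpair (C : Category) (D : LiabilityStructure C) (A B Z : Obj C)
    (f : Hom Z A) (g : Hom Z B) : Hom Z (bprod D A B) :=
  tpl D (P := b2 A B) (fun b => match b return Hom Z (b2 A B b) with
                                | true => f | false => g end).

Definition inEdges {V E : finType} (t : E -> V) (v : V) : finType :=
  {e : E | t e == v}.

Record Network (C : Category) (D : LiabilityStructure C)
    (V E : finType) (s t : E -> V) := {
  X : V -> Obj C;
  lam : forall e : E, Hom (term D) (X (s e));
  iota : forall v : V, Hom (term D) (X v);
  (* X_{s(e)}^{lambda_e} : domain of beta(lambda_e) *)
  delta : forall e : E, Hom (X (s e)) (projT1 (sval (bsel D (lam e))));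
  ahat : forall v : V,
      Hom (bprod D (X v) (prodO D (fun i : inEdges t v =>
                                  projT1 (sval (bsel D (lam (sval i)))))))
          (X v)
}.

Arguments X {C D V E s t} _ _.
Arguments lam {C D V E s t} _ _.
Arguments iota {C D V E s t} _ _.
Arguments delta {C D V E s t} _ _.
Arguments ahat {C D V E s t} _ _.

Section NetDefs.
Variables (C : Category) (D : LiabilityStructure C) (V E : finType) (s t : E -> V).
Variable N : Network D s t.

Definition Xlam (e : E) : Obj C := projT1 (sval (bsel D (lam N e))).

Definition beta_incl (e : E) : Hom (Xlam e) (X N (s e)) :=
  projT2 (sval (bsel D (lam N e))).

Definition Pin (v : V) : Obj C := prodO D (fun i : inEdges t v => Xlam (sval i)).

(* partial aggregator alpha_v = ahat_v o (iota_v x id) o (prod ~ 1 x prod),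
   i.e. ahat_v o < iota_v o ! , id > *)
Definition palpha (v : V) : Hom (Pin v) (X N v) :=
  cmp (ahat N v) (bpair D (cmp (iota N v) (bang D (Pin v))) (idm (Pin v))).

(* Objects of the incidence category I(H_G) of the liability hypergraph *)
Inductive IObj :=
  | IV of V
  | IE of E        (* vertex e^* *)
  | IHd of V       (* hyperedge h_v^delta *)
  | IHa of V.      (* hyperedge h_v^alpha *)

Definition Lobj (y : IObj) : Obj C :=
  match y with
  | IV v => X N v
  | IE e => Xlam e
  | IHd v => X N v
  | IHa v => Pin v
  end.

(* The only
   non-identity morphisms of I(H_G) are
     h_v^delta -> v        (L = id),
     h_{s(e)}^delta -> e^*  (L = delta_e),
     h_v^alpha -> e^*  for t(e) = v  (L = product projection),
     h_v^alpha -> v        (L = alpha_v),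
   and there are no composable pairs of non-identity morphisms, so
   naturality amounts to the following equations. *)
Definition is_cone (Z : Obj C) (c : forall y : IObj, Hom Z (Lobj y)) : Prop :=
  (forall v : V, c (IV v) = cmp (idm (X N v)) (c (IHd v))) /\
  (forall e : E, c (IE e) = cmp (delta N e) (c (IHd (s e)))) /\
  (forall (v : V) (i : inEdges t v),
      c (IE (sval i)) = cmp (prj D (fun j : inEdges t v => Xlam (sval j)) i) (c (IHa v))) /\
  (forall v : V, c (IV v) = cmp (palpha v) (c (IHa v))).

(* (H, pi) is a limit of L, i.e. H = H^0(H_G; L) with its projections *)
Definition is_limit (H : Obj C) (pi : forall y : IObj, Hom H (Lobj y)) : Prop :=
  is_cone pi /\
  forall (Z : Obj C) (c : forall y : IObj, Hom Z (Lobj y)), is_cone c ->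
    exists! u : Hom Z H, forall y, cmp (pi y) u = c y.

End NetDefs.

Arguments IV {V E}.
Arguments IE {V E}.
Arguments IHd {V E}.
Arguments IHa {V E}.

Arguments Xlam {C D V E s t} N e.
Arguments beta_incl {C D V E s t} N e.
Arguments Pin {C D V E s t} N v.
Arguments palpha {C D V E s t} N v.
Arguments Lobj {C D V E s t} N y.
Arguments is_cone {C D V E s t} N Z c.
Arguments is_limit {C D V E s t} N H pi.

(* A global section is a cone over the liability sheaf with apex the terminal
   object.  The incidence category has no composable pairs of non-identity
   arrows, so a cone is a family of components subject only to the four
   naturality equations.  Those at the hyperedges force the components
   there: the one at h_v^delta equals x_v (its leg to v is the identity) and
   the one at h_v^alpha is the tuple of the p_e with t(e) = v (by the
   universal property of the product).  What remains are exactly the two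
   equations of the statement, and the universal property of the limit turns
   cones into global sections, uniquely. *)
From mathcomp Require Import all_boot.

Set Implicit Arguments.
Unset Strict Implicit.
Unset Printing Implicit Defensive.

Section LiabilitySheafCones.

Variables (C : Category) (D : LiabilityStructure C).
Variables (V E : finType) (s t : E -> V) (N : Network D s t).

Definition tuple_in (Z : Obj C) (v : V) (p : forall e : E, Hom Z (Xlam N e)) :
    Hom Z (Pin N v) :=
  tpl D (P := fun i : inEdges t v => Xlam N (sval i)) (fun i => p (sval i)).

Section Cone.

Variables (Z : Obj C) (c : forall y : IObj V E, Hom Z (Lobj N y)).
Hypothesis c_cone : is_cone N Z c.

Lemma cone_IHd (v : V) : c (IHd v) = c (IV v).
Proof. by case: c_cone => [cIV _]; rewrite cIV cmp1l. Qed.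

Lemma cone_IHa (v : V) : c (IHa v) = tuple_in v (fun e => c (IE e)).
Proof. by case: c_cone => [_ [_ [cIE _]]]; apply: tpl_uniq => i; rewrite cIE. Qed.

Lemma cone_delta (e : E) : c (IE e) = cmp (delta N e) (c (IV (s e))).
Proof. by case: c_cone => [_ [cIE _]]; rewrite cIE cone_IHd. Qed.

Lemma cone_palpha (v : V) :
  c (IV v) = cmp (palpha N v) (tuple_in v (fun e => c (IE e))).
Proof. by case: c_cone => [_ [_ [_ cIV]]]; rewrite cIV cone_IHa. Qed.

Lemma is_cone_comp (W : Obj C) (u : Hom W Z) :
  is_cone N W (fun y => cmp (c y) u).
Proof.
case: c_cone => [cIV [cIE [cprj cpalpha]]].
split; [|split; [|split]] => [v|e|v i|v].
- by rewrite cIV !cmp1l.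
- by rewrite cIE cmpA.
- by rewrite cprj cmpA.
- by rewrite cpalpha cmpA.
Qed.

End Cone.

Lemma cone_eq_vertices (Z : Obj C) (c c' : forall y : IObj V E, Hom Z (Lobj N y)) :
  is_cone N Z c -> is_cone N Z c' ->
  (forall v : V, c (IV v) = c' (IV v)) ->
  (forall e : E, c (IE e) = c' (IE e)) ->
  forall y, c y = c' y.
Proof.
move=> cc cc' eqV eqE [v|e|v|v].
- exact: eqV.
- exact: eqE.
- by rewrite (cone_IHd cc) (cone_IHd cc') eqV.
- rewrite (cone_IHa cc) (cone_IHa cc') /tuple_in.
  by apply: tpl_uniq => i; rewrite prj_tpl eqE.
Qed.

Definition cone_of (Z : Obj C)
    (x : forall v : V, Hom Z (X N v)) (p : forall e : E, Hom Z (Xlam N e)) :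
    forall y : IObj V E, Hom Z (Lobj N y) :=
  fun y => match y return Hom Z (Lobj N y) with
           | IV v | IHd v => x v
           | IE e => p e
           | IHa v => tuple_in v p
           end.

Lemma cone_ofP (Z : Obj C)
    (x : forall v : V, Hom Z (X N v)) (p : forall e : E, Hom Z (Xlam N e)) :
  (forall e : E, p e = cmp (delta N e) (x (s e))) ->
  (forall v : V, x v = cmp (palpha N v) (tuple_in v p)) ->
  is_cone N Z (cone_of x p).
Proof.
move=> p_delta x_palpha; split; [|split; [|split]] => [v|e|v i|v] /=.
- by rewrite cmp1l.
- exact: p_delta.
- by rewrite prj_tpl.
- exact: x_palpha.
Qed.

Section Limit.

Variables (H : Obj C) (pi : forall y : IObj V E, Hom H (Lobj N y)).
Hypothesis pi_limit : is_limit N H pi.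

Lemma limit_hom_eq (Z : Obj C) (u u' : Hom Z H) :
  (forall v : V, cmp (pi (IV v)) u = cmp (pi (IV v)) u') ->
  (forall e : E, cmp (pi (IE e)) u = cmp (pi (IE e)) u') ->
  u = u'.
Proof.
move=> eqV eqE; case: pi_limit => pi_cone pi_univ.
have [w [_ w_uniq]] := pi_univ _ _ (is_cone_comp pi_cone u').
have <- : w = u.
  by apply: w_uniq; apply: cone_eq_vertices => //; apply: is_cone_comp.
by apply: w_uniq.
Qed.

Lemma limit_lift (Z : Obj C)
    (x : forall v : V, Hom Z (X N v)) (p : forall e : E, Hom Z (Xlam N e)) :
  (forall e : E, p e = cmp (delta N e) (x (s e))) ->
  (forall v : V, x v = cmp (palpha N v) (tuple_in v p)) ->
  exists u : Hom Z H,
    (forall v : V, cmp (pi (IV v)) u = x v) /\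
    (forall e : E, cmp (pi (IE e)) u = p e).
Proof.
move=> p_delta x_palpha; case: pi_limit => _ pi_univ.
have [u [u_comp _]] := pi_univ _ _ (cone_ofP p_delta x_palpha).
by exists u; split => [v|e]; [exact: (u_comp (IV v)) | exact: (u_comp (IE e))].
Qed.

End Limit.

End LiabilitySheafCones.

Theorem mainTheorem1
  (C : Category) (D : LiabilityStructure C)
  (V E : finType) (s t : E -> V) (N : Network D s t)
  (H : Obj C) (pi : forall y : IObj V E, Hom H (Lobj N y))
  (Hlim : is_limit N H pi) :
  (* the components of every global section satisfy the two equations *)
  (forall sigma : Hom (term D) H,
     (forall e : E,
        cmp (pi (IE e)) sigma = cmp (delta N e) (cmp (pi (IV (s e))) sigma)) /\
     (forall v : V,
        cmp (pi (IV v)) sigma =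
        cmp (palpha N v) (tpl D (P := fun i : inEdges t v => Xlam N (sval i))
                                (fun i => cmp (pi (IE (sval i))) sigma)))) /\
  (* the assignment sigma |-> ((sigma_v)_v, (sigma_{e^*})_e) is injective *)
  (forall sigma sigma' : Hom (term D) H,
     (forall v : V, cmp (pi (IV v)) sigma = cmp (pi (IV v)) sigma') ->
     (forall e : E, cmp (pi (IE e)) sigma = cmp (pi (IE e)) sigma') ->
     sigma = sigma') /\
  (* and every family satisfying the equations arises from a global section *)
  (forall (x : forall v : V, Hom (term D) (X N v))
          (p : forall e : E, Hom (term D) (Xlam N e)),
     (forall e : E, p e = cmp (delta N e) (x (s e))) ->
     (forall v : V,
        x v = cmp (palpha N v) (tpl D (P := fun i : inEdges t v => Xlam N (sval i))
                                      (fun i => p (sval i)))) ->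
     exists sigma : Hom (term D) H,
       (forall v : V, cmp (pi (IV v)) sigma = x v) /\
       (forall e : E, cmp (pi (IE e)) sigma = p e)).
Proof.
split; [|split].
- move=> sigma; have sigma_cone := is_cone_comp (proj1 Hlim) sigma.
  by split=> [e|v]; [exact: (cone_delta sigma_cone e) | exact: (cone_palpha sigma_cone v)].
- exact: limit_hom_eq.
- exact: limit_lift.
Qed.
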